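(* For $a,b>0$, $\lambda\ge0$ and $0<x<1$, $$e^{-\lambda}x^a(1-x)^b\sum_{n=0}^\infty\frac{\Gamma(a+b+n)}{\Gamma(b)\Gamma(a+1+n)}x^n\sum_{j=0}^n\frac{\lambda^j}{j!}=B_{a,b}(2\lambda,x).$$
   Context: For $p,q>0$ and $0\le y\le 1$, $I_y(p,q)=\frac{1}{B(p,q)}\int_0^y t^{p-1}(1-t)^{q-1}\,dt$ is the regularized incomplete beta function, with $B(p,q)=\Gamma(p)\Gamma(q)/\Gamma(p+q)$. The cumulative noncentral beta distribution is $B_{p,q}(x,y)=e^{-x/2}\sum_{j=0}^\infty \frac{1}{j!}\left(\frac x2\right)^j I_y(p+j,q)$ for $x\ge0$. *)

From Stdlib Require Import Reals Arith ClassicalEpsilon.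
Open Scope R_scope.

Definition gamma_integrand (s : R) (t : R) : R := Rpower t (s - 1) * exp (- t).

(* g is the value of the improper integral  int_0^infty t^(s-1) e^(-t) dt,
   i.e. the limit of int_u^v as u -> 0+ and v -> +infty. *)
Definition is_gamma_integral (s g : R) : Prop :=
  (forall u v, 0 < u -> u <= v -> inhabited (Riemann_integrable (gamma_integrand s) u v)) /\
  (forall eps, 0 < eps -> exists delta, 0 < delta /\ exists M,
     forall u v (pr : Riemann_integrable (gamma_integrand s) u v),
       0 < u -> u < delta -> M < v -> u <= v ->
       Rabs (RiemannInt pr - g) < eps).

(* Euler's Gamma function (meaningful for s > 0). *)
Definition Gamma (s : R) : R := epsilon (inhabits 0) (is_gamma_integral s).

Definition Beta (p q : R) : R := Gamma p * Gamma q / Gamma (p + q).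

Definition beta_integrand (p q : R) (t : R) : R :=
  Rpower t (p - 1) * Rpower (1 - t) (q - 1).

(* l is the (possibly improper at 0) integral int_0^y t^(p-1)(1-t)^(q-1) dt,
   i.e. the limit of int_u^y as u -> 0+ (used for 0 < y < 1). *)
Definition is_inc_beta_integral (p q y l : R) : Prop :=
  (forall u, 0 < u -> u <= y -> inhabited (Riemann_integrable (beta_integrand p q) u y)) /\
  (forall eps, 0 < eps -> exists delta, 0 < delta /\
     forall u (pr : Riemann_integrable (beta_integrand p q) u y),
       0 < u -> u < delta -> u <= y ->
       Rabs (RiemannInt pr - l) < eps).

Definition inc_beta_integral (p q y : R) : R :=
  epsilon (inhabits 0) (is_inc_beta_integral p q y).

Definition reg_inc_beta (y p q : R) : R := inc_beta_integral p q y / Beta p q.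

(* Cumulative noncentral beta distribution
   B_{p,q}(x,y) = e^{-x/2} sum_{j>=0} (x/2)^j / j! * I_y(p+j,q). *)
Definition ncbeta_term (p q x y : R) (j : nat) : R :=
  / INR (fact j) * (x / 2) ^ j * reg_inc_beta y (p + INR j) q.

Definition ncbeta (p q x y : R) : R :=
  exp (- (x / 2)) * epsilon (inhabits 0) (infinite_sum (ncbeta_term p q x y)).

(* Proof outline.
   1. Gamma: for s > 0 the partial integrals int_u^v t^(s-1) e^{-t} dt are
      bounded, hence converge (to their supremum) as u -> 0+, v -> +oo; the
      limit Gamma(s) is positive and, integrating by parts, Gamma(s+1) = s Gamma(s).
   2. Incomplete beta: for p > 0 the integral J(p) = int_0^y t^(p-1)(1-t)^(q-1)
      exists; integration by parts gives p J(p) - (p+q) J(p+1) = y^p (1-y)^q,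
      and J(p+1) <= y J(p).
   3. Dividing by B(p,q) and using step 1, I_y(p,q) - I_y(p+1,q)
      = Gamma(p+q)/(Gamma(q) Gamma(p+1)) y^p (1-y)^q, while I_y(p+n,q) -> 0
      geometrically; telescoping yields a series for I_y(p,q).
   4. Hence the tails sum_{k>=j} of the coefficient series of the theorem are
      I_x(a+j,b) / (x^a (1-x)^b); exchanging the order of the double sum
      sum_n c_n sum_{j<=n} lam^j/j! (all terms nonnegative) gives the Poisson
      mixture sum_j lam^j/j! I_x(a+j,b) defining B_{a,b}(2 lam, x). *)

From Stdlib Require Import Reals Arith Lra Lia ClassicalEpsilon.
From Coquelicot Require Import Coquelicot.
Open Scope R_scope.

Lemma exp_le_compat x y : x <= y -> exp x <= exp y.
Proof.
  intros H; destruct (Rle_lt_or_eq_dec _ _ H) as [Hlt | ->].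
  - left; now apply exp_increasing.
  - now right.
Qed.

Lemma ln_le_sub1 y : 0 < y -> ln y <= y - 1.
Proof.
  intros Hy; rewrite <- (ln_exp (y - 1)).
  destruct (Rle_lt_or_eq_dec _ _ (exp_ineq1_le (y - 1))) as [H | H].
  - left; apply ln_increasing; lra.
  - right; f_equal; lra.
Qed.

Lemma power_exp_le_max a t : 0 < a -> 0 < t ->
  exp (a * ln t - t) <= exp (a * ln a - a).
Proof.
  intros Ha Ht; apply exp_le_compat.
  assert (Hln := ln_le_sub1 (t / a) ltac:(apply Rdiv_lt_0_compat; lra)).
  rewrite ln_div in Hln by lra.
  assert (Hscaled : a * (ln t - ln a) <= a * (t / a - 1)) by (apply Rmult_le_compat_l; lra).
  replace (a * (t / a - 1)) with (t - a) in Hscaled by (field; lra).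
  nra.
Qed.

Lemma exp_pred_ln a t : 0 < t -> exp ((a - 1) * ln t) = exp (a * ln t) / t.
Proof.
  intros Ht; replace ((a - 1) * ln t) with (a * ln t + - ln t) by ring.
  rewrite exp_plus, exp_Ropp, exp_ln by lra; field; lra.
Qed.

Lemma power_vanishes_at_0 p : 0 < p ->
  forall eps, 0 < eps -> exists d, 0 < d /\
    forall u, 0 < u -> u < d -> exp (p * ln u) < eps.
Proof.
  intros Hp eps He; exists (exp (ln eps / p)); split; [apply exp_pos |].
  intros u Hu Hud.
  assert (Hlt : ln u < ln eps / p).
  { rewrite <- (ln_exp (ln eps / p)); now apply ln_increasing. }
  apply (Rmult_lt_compat_l p) in Hlt; [| lra].
  replace (p * (ln eps / p)) with (ln eps) in Hlt by (field; lra).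
  rewrite <- (exp_ln eps) by lra; now apply exp_increasing.
Qed.

(* t^s e^{-t} -> 0 as t -> +oo: it is at most ((s+1)^(s+1) e^{-(s+1)}) / t. *)
Lemma power_exp_vanishes_at_infinity s : 0 < s ->
  forall eps, 0 < eps -> exists M, forall v, M < v ->
    exp (s * ln v) * exp (- v) < eps.
Proof.
  intros Hs eps He.
  set (K := exp ((s + 1) * ln (s + 1) - (s + 1))).
  assert (HK : 0 < K) by apply exp_pos.
  exists (K / eps); intros v Hv.
  assert (Hv0 : 0 < v) by (assert (0 < K / eps) by (apply Rdiv_lt_0_compat; lra); lra).
  assert (E : exp (s * ln v) * exp (- v) = exp ((s + 1) * ln v - v) / v).
  { replace ((s + 1) * ln v - v) with (s * ln v + - v + ln v) by ring.
    rewrite !exp_plus, exp_ln by lra; field; lra. }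
  rewrite E; apply (Rle_lt_trans _ (K / v)).
  - apply Rmult_le_compat_r; [left; apply Rinv_0_lt_compat; lra |].
    now apply power_exp_le_max; lra.
  - apply (Rmult_lt_reg_r v); [lra |].
    unfold Rdiv; rewrite Rmult_assoc, Rinv_l by lra.
    apply (Rmult_lt_compat_r eps) in Hv; [| lra].
    unfold Rdiv in Hv; rewrite Rmult_assoc, Rinv_l in Hv by lra; lra.
Qed.

Lemma eq_of_close a b : (forall eps, 0 < eps -> Rabs (a - b) < eps) -> a = b.
Proof.
  intros H; destruct (Req_dec a b) as [| Hn]; auto.
  assert (Hpos : 0 < Rabs (a - b)) by (apply Rabs_pos_lt; lra).
  specialize (H _ Hpos); lra.
Qed.

Lemma lub_approx (E : R -> Prop) g eps : is_lub E g -> 0 < eps ->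
  exists z, E z /\ g - eps < z.
Proof.
  intros [_ Hlub] He; apply Classical_Prop.NNPP; intros Hn.
  assert (Hub : is_upper_bound E (g - eps)).
  { intros z Hz; apply Rnot_lt_le; intros Hl; apply Hn; now exists z. }
  specialize (Hlub _ Hub); lra.
Qed.

(* An equation whose left side is a Coquelicot integral is typed in the
   normed-module carrier; retype it in R so that ring/field/lra apply. *)
Ltac as_real_eq := match goal with |- @eq _ ?a ?b => change (@eq R a b) end.

Lemma RInt_scal_R (f : R -> R) a b k : ex_RInt f a b ->
  RInt (fun t => k * f t) a b = k * RInt f a b.
Proof. exact (RInt_scal f a b k). Qed.

Lemma RInt_minus_R (f g : R -> R) a b : ex_RInt f a b -> ex_RInt g a b ->
  RInt (fun t => f t - g t) a b = RInt f a b - RInt g a b.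
Proof. exact (RInt_minus f g a b). Qed.

Lemma ex_RInt_derivable (f : R -> R) u v :
  (forall z, Rmin u v <= z <= Rmax u v -> ex_derive f z) -> ex_RInt f u v.
Proof.
  intros Hd; apply (ex_RInt_continuous (V := R_CompleteNormedModule)).
  intros z Hz; apply (ex_derive_continuous f); auto.
Qed.

Lemma RInt_antiderivative (F f : R -> R) u v :
  (forall z, Rmin u v <= z <= Rmax u v -> is_derive F z (f z)) ->
  (forall z, Rmin u v <= z <= Rmax u v -> ex_derive f z) ->
  F v - F u = RInt f u v.
Proof.
  intros HF Hf; symmetry; apply is_RInt_unique.
  apply (is_RInt_derive (V := R_CompleteNormedModule) F f u v HF).
  intros z Hz; apply (ex_derive_continuous f); auto.
Qed.

Lemma segment_pos u v z : 0 < u -> 0 < v -> Rmin u v <= z <= Rmax u v -> 0 < z.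
Proof. intros Hu Hv Hz; assert (0 < Rmin u v) by (apply Rmin_glb_lt; lra); lra. Qed.

Lemma segment_unit u v z : 0 < u < 1 -> 0 < v < 1 ->
  Rmin u v <= z <= Rmax u v -> 0 < z < 1.
Proof.
  intros Hu Hv Hz; assert (0 < Rmin u v) by (apply Rmin_glb_lt; lra).
  assert (Rmax u v < 1) by (apply Rmax_lub_lt; lra); lra.
Qed.

Lemma RInt_power u v s : 0 < s -> 0 < u -> 0 < v ->
  RInt (fun t => exp ((s - 1) * ln t)) u v = (exp (s * ln v) - exp (s * ln u)) / s.
Proof.
  intros Hs Hu Hv; as_real_eq.
  rewrite <- (RInt_antiderivative (fun t => exp (s * ln t) / s)).
  - field; lra.
  - intros z Hz; pose proof (segment_pos u v z Hu Hv Hz).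
    auto_derive; [lra |]. rewrite exp_pred_ln by lra; field; lra.
  - intros z Hz; pose proof (segment_pos u v z Hu Hv Hz); auto_derive; lra.
Qed.

Lemma RInt_inv_square u v : 0 < u -> 0 < v ->
  RInt (fun t => / (t * t)) u v = / u - / v.
Proof.
  intros Hu Hv; as_real_eq; rewrite <- (RInt_antiderivative (fun t => - / t)).
  - field; lra.
  - intros z Hz; pose proof (segment_pos u v z Hu Hv Hz).
    auto_derive; [lra |]. field; lra.
  - intros z Hz; pose proof (segment_pos u v z Hu Hv Hz); auto_derive; nra.
Qed.

Lemma gamma_integrand_pos s t : 0 < gamma_integrand s t.
Proof. unfold gamma_integrand, Rpower; apply Rmult_lt_0_compat; apply exp_pos. Qed.

Lemma gamma_integrand_derivable s t : 0 < t -> ex_derive (gamma_integrand s) t.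
Proof. intros Ht; unfold gamma_integrand, Rpower; auto_derive; lra. Qed.

Definition gamma_partial (s u v : R) : R := RInt (gamma_integrand s) u v.

Lemma ex_RInt_gamma s u v : 0 < u -> 0 < v -> ex_RInt (gamma_integrand s) u v.
Proof.
  intros Hu Hv; apply ex_RInt_derivable; intros z Hz.
  apply gamma_integrand_derivable, (segment_pos u v); auto.
Qed.

Lemma gamma_partial_chasles s u v w : 0 < u -> 0 < v -> 0 < w ->
  gamma_partial s u v + gamma_partial s v w = gamma_partial s u w.
Proof. intros; apply (RInt_Chasles (gamma_integrand s)); now apply ex_RInt_gamma. Qed.

Lemma gamma_partial_nonneg s u v : 0 < u <= v -> 0 <= gamma_partial s u v.
Proof.
  intros Huv; apply RInt_ge_0; [lra | apply ex_RInt_gamma; lra |].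
  intros; left; apply gamma_integrand_pos.
Qed.

Lemma gamma_partial_mono s u' u v v' : 0 < u' <= u -> u <= v <= v' ->
  gamma_partial s u v <= gamma_partial s u' v'.
Proof.
  intros Hu Hv.
  rewrite <- (gamma_partial_chasles s u' u v') by lra.
  rewrite <- (gamma_partial_chasles s u v v') by lra.
  pose proof (gamma_partial_nonneg s u' u ltac:(lra)).
  pose proof (gamma_partial_nonneg s v v' ltac:(lra)); lra.
Qed.

(* Near 0: t^(s-1) e^(-t) <= t^(s-1), whose integral over (0,1] is 1/s. *)
Lemma gamma_partial_head_le s u : 0 < s -> 0 < u <= 1 -> gamma_partial s u 1 <= / s.
Proof.
  intros Hs Hu; unfold gamma_partial.
  assert (Hex : ex_RInt (fun t => exp ((s - 1) * ln t)) u 1).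
  { apply ex_RInt_derivable; intros z Hz.
    pose proof (segment_pos u 1 z ltac:(lra) ltac:(lra) Hz); auto_derive; lra. }
  apply (Rle_trans _ (RInt (fun t => exp ((s - 1) * ln t)) u 1)).
  - apply RInt_le; [lra | apply ex_RInt_gamma; lra | exact Hex |].
    intros t Ht; unfold gamma_integrand, Rpower.
    rewrite <- (Rmult_1_r (exp ((s - 1) * ln t))) at 2.
    apply Rmult_le_compat_l; [left; apply exp_pos |].
    rewrite <- exp_0; apply exp_le_compat; lra.
  - rewrite RInt_power, ln_1, Rmult_0_r, exp_0 by lra.
    pose proof (exp_pos (s * ln u)).
    assert (0 < / s) by (apply Rinv_0_lt_compat; lra); unfold Rdiv; nra.
Qed.

(* Near +oo: t^(s-1) e^(-t) <= K / t^2 with K = (s+1)^(s+1) e^{-(s+1)}. *)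
Lemma gamma_partial_tail_le s v : 0 < s -> 1 <= v ->
  gamma_partial s 1 v <= exp ((s + 1) * ln (s + 1) - (s + 1)).
Proof.
  intros Hs Hv; unfold gamma_partial.
  set (K := exp ((s + 1) * ln (s + 1) - (s + 1))).
  assert (Hex : ex_RInt (fun t => / (t * t)) 1 v).
  { apply ex_RInt_derivable; intros z Hz.
    pose proof (segment_pos 1 v z ltac:(lra) ltac:(lra) Hz); auto_derive; nra. }
  apply (Rle_trans _ (RInt (fun t => K * / (t * t)) 1 v)).
  - apply RInt_le; [lra | apply ex_RInt_gamma; lra | exact (ex_RInt_scal (V := R_NormedModule) _ _ _ K Hex) |].
    intros t Ht; unfold gamma_integrand, Rpower.
    assert (E : exp ((s - 1) * ln t) * exp (- t) = exp ((s + 1) * ln t - t) * / (t * t)).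
    { replace ((s + 1) * ln t - t) with ((s - 1) * ln t + - t + ln t + ln t) by ring.
      rewrite !exp_plus, exp_ln by lra; field; lra. }
    rewrite E; apply Rmult_le_compat_r; [left; apply Rinv_0_lt_compat; nra |].
    apply power_exp_le_max; lra.
  - rewrite RInt_scal_R, RInt_inv_square, Rinv_1 by (auto; lra).
    assert (0 < K) by apply exp_pos.
    assert (0 < / v) by (apply Rinv_0_lt_compat; lra); nra.
Qed.

Lemma gamma_partial_bounded s : 0 < s ->
  exists B, forall u v, 0 < u <= v -> gamma_partial s u v <= B.
Proof.
  intros Hs; exists (/ s + exp ((s + 1) * ln (s + 1) - (s + 1))); intros u v Huv.
  set (u' := Rmin u 1); set (v' := Rmax v 1).
  assert (Hu' : 0 < u' <= 1) by (unfold u'; split; [apply Rmin_glb_lt; lra | apply Rmin_r]).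
  assert (Hv' : 1 <= v') by (unfold v'; apply Rmax_r).
  pose proof (Rmin_l u 1); pose proof (Rmax_l v 1).
  pose proof (gamma_partial_mono s u' u v v' ltac:(unfold u' in *; lra)
                ltac:(unfold v' in *; lra)) as Henlarge.
  rewrite <- (gamma_partial_chasles s u' 1 v') in Henlarge by lra.
  pose proof (gamma_partial_head_le s u' Hs Hu').
  pose proof (gamma_partial_tail_le s v' Hs Hv'); lra.
Qed.

Definition converges_0_inf (F : R -> R -> R) (g : R) : Prop :=
  forall eps, 0 < eps -> exists delta, 0 < delta /\ exists M,
    forall u v, 0 < u -> u < delta -> M < v -> u <= v -> Rabs (F u v - g) < eps.

Lemma converges_0_inf_unique F g1 g2 :
  converges_0_inf F g1 -> converges_0_inf F g2 -> g1 = g2.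
Proof.
  intros H1 H2; apply eq_of_close; intros eps He.
  destruct (H1 (eps / 2)) as [d1 [Hd1 [M1 A1]]]; [lra |].
  destruct (H2 (eps / 2)) as [d2 [Hd2 [M2 A2]]]; [lra |].
  set (u := Rmin d1 d2 / 2); set (v := Rmax (Rmax M1 M2) u + 1).
  assert (0 < Rmin d1 d2) by (apply Rmin_glb_lt; lra).
  pose proof (Rmin_l d1 d2); pose proof (Rmin_r d1 d2).
  pose proof (Rmax_l (Rmax M1 M2) u); pose proof (Rmax_r (Rmax M1 M2) u).
  pose proof (Rmax_l M1 M2); pose proof (Rmax_r M1 M2).
  specialize (A1 u v ltac:(unfold u; lra) ltac:(unfold u; lra) ltac:(unfold v; lra)
                ltac:(unfold v; lra)).
  specialize (A2 u v ltac:(unfold u; lra) ltac:(unfold u; lra) ltac:(unfold v; lra)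
                ltac:(unfold v; lra)).
  apply Rabs_def2 in A1; apply Rabs_def2 in A2; apply Rabs_def1; lra.
Qed.

Lemma converges_0_inf_affine (F1 F2 : R -> R -> R) (b1 b2 : R -> R) c g :
  0 <= c -> converges_0_inf F1 g ->
  (forall u v, 0 < u -> u <= v -> F2 u v = c * F1 u v + b1 u - b2 v) ->
  (forall eps, 0 < eps -> exists d, 0 < d /\ forall u, 0 < u -> u < d -> Rabs (b1 u) < eps) ->
  (forall eps, 0 < eps -> exists M, forall v, M < v -> Rabs (b2 v) < eps) ->
  converges_0_inf F2 (c * g).
Proof.
  intros Hc H1 HF Hb1 Hb2 eps He.
  set (e := eps / (c + 2)).
  assert (He' : 0 < e) by (unfold e; apply Rdiv_lt_0_compat; lra).
  destruct (H1 e He') as [d [Hd [M HM]]].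
  destruct (Hb1 e He') as [d1 [Hd1 Hd1']].
  destruct (Hb2 e He') as [M2 HM2].
  exists (Rmin d d1); split; [apply Rmin_glb_lt; lra |].
  exists (Rmax M M2); intros u v Hu Hud HMv Huv.
  pose proof (Rmin_l d d1); pose proof (Rmin_r d d1).
  pose proof (Rmax_l M M2); pose proof (Rmax_r M M2).
  rewrite HF by lra.
  specialize (HM u v Hu ltac:(lra) ltac:(lra) Huv).
  specialize (Hd1' u Hu ltac:(lra)); specialize (HM2 v ltac:(lra)).
  apply Rabs_def2 in HM; apply Rabs_def2 in Hd1'; apply Rabs_def2 in HM2.
  assert (eps = c * e + 2 * e) by (unfold e; field; lra).
  assert (- e * c <= (F1 u v - g) * c <= e * c) by (split; apply Rmult_le_compat_r; lra).
  apply Rabs_def1; nra.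
Qed.

Lemma is_gamma_integral_iff s g : is_gamma_integral s g <-> converges_0_inf (gamma_partial s) g.
Proof.
  split.
  - intros [_ H] eps He; destruct (H eps He) as [d [Hd [M HM]]].
    exists d; split; auto; exists M; intros u v Hu Hud HMv Huv.
    pose proof (ex_RInt_Reals_0 _ _ _ (ex_RInt_gamma s u v Hu ltac:(lra))) as pr.
    unfold gamma_partial; rewrite (RInt_Reals _ _ _ pr); now apply HM.
  - intros H; split.
    + intros u v Hu Huv; constructor; apply ex_RInt_Reals_0, ex_RInt_gamma; lra.
    + intros eps He; destruct (H eps He) as [d [Hd [M HM]]].
      exists d; split; auto; exists M; intros u v pr Hu Hud HMv Huv.
      rewrite <- RInt_Reals; now apply HM.
Qed.

(* For s > 0 the partial integrals increase to their supremum, which is the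
   value of the improper integral. *)
Lemma gamma_partial_converges s : 0 < s ->
  exists g, converges_0_inf (gamma_partial s) g /\
            forall u v, 0 < u <= v -> gamma_partial s u v <= g.
Proof.
  intros Hs; destruct (gamma_partial_bounded s Hs) as [B HB].
  set (E := fun z => exists u v, 0 < u <= v /\ z = gamma_partial s u v).
  assert (Hb : bound E) by (exists B; intros z [u [v [Huv ->]]]; now apply HB).
  assert (Hne : exists z, E z) by (exists (gamma_partial s 1 1); exists 1, 1; split; auto; lra).
  destruct (completeness E Hb Hne) as [g Hg].
  assert (Hle : forall u v, 0 < u <= v -> gamma_partial s u v <= g)
    by (intros u v Huv; apply (proj1 Hg); exists u, v; auto).
  exists g; split; auto.
  intros eps He; destruct (lub_approx E g eps Hg He) as [z [[u0 [v0 [Huv0 ->]]] Hgt]].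
  exists u0; split; [lra |]; exists v0; intros u v Hu Hu0 Hv0 Huv.
  pose proof (gamma_partial_mono s u u0 v0 v ltac:(lra) ltac:(lra)).
  pose proof (Hle u v ltac:(lra)); apply Rabs_def1; lra.
Qed.

Lemma Gamma_spec s : 0 < s ->
  converges_0_inf (gamma_partial s) (Gamma s) /\
  forall u v, 0 < u <= v -> gamma_partial s u v <= Gamma s.
Proof.
  intros Hs; destruct (gamma_partial_converges s Hs) as [g [Hg Hle]].
  assert (HG : is_gamma_integral s (Gamma s)).
  { unfold Gamma; apply epsilon_spec; exists g; now apply is_gamma_integral_iff. }
  apply is_gamma_integral_iff in HG.
  rewrite (converges_0_inf_unique _ _ _ HG Hg); auto.
Qed.

Lemma Gamma_pos s : 0 < s -> 0 < Gamma s.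
Proof.
  intros Hs; destruct (Gamma_spec s Hs) as [_ Hle].
  assert (0 < gamma_partial s 1 2).
  { apply RInt_gt_0; try lra; intros; [apply gamma_integrand_pos |].
    apply (ex_derive_continuous (gamma_integrand s)), gamma_integrand_derivable; lra. }
  specialize (Hle 1 2 ltac:(lra)); lra.
Qed.

Lemma gamma_partial_succ s u v : 0 < u -> 0 < v ->
  gamma_partial (s + 1) u v =
  s * gamma_partial s u v + exp (s * ln u) * exp (- u) - exp (s * ln v) * exp (- v).
Proof.
  intros Hu Hv.
  set (f := fun t => gamma_integrand (s + 1) t - s * gamma_integrand s t).
  assert (E : RInt f u v = exp (s * ln u) * exp (- u) - exp (s * ln v) * exp (- v)).
  { as_real_eq; rewrite <- (RInt_antiderivative (fun t => - (exp (s * ln t) * exp (- t))));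
      [ring | intros z Hz; pose proof (segment_pos u v z Hu Hv Hz); unfold f ..].
    - auto_derive; [lra |]; unfold gamma_integrand, Rpower.
      replace (s + 1 - 1) with s by ring; rewrite exp_pred_ln by lra; field; lra.
    - unfold gamma_integrand, Rpower; auto_derive; lra. }
  pose proof (ex_RInt_gamma (s + 1) u v Hu Hv) as X1.
  pose proof (ex_RInt_gamma s u v Hu Hv) as X2.
  unfold f in E; rewrite RInt_minus_R, RInt_scal_R in E; auto.
  - unfold gamma_partial; lra.
  - exact (ex_RInt_scal (V := R_NormedModule) _ _ _ s X2).
Qed.

Lemma Gamma_succ s : 0 < s -> Gamma (s + 1) = s * Gamma s.
Proof.
  intros Hs.
  destruct (Gamma_spec s Hs) as [H1 _]; destruct (Gamma_spec (s + 1) ltac:(lra)) as [H2 _].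
  apply (converges_0_inf_unique (gamma_partial (s + 1))); auto.
  apply (converges_0_inf_affine (gamma_partial s) _ (fun u => exp (s * ln u) * exp (- u))
           (fun v => exp (s * ln v) * exp (- v))); try lra; auto.
  - intros u v Hu Huv; apply gamma_partial_succ; lra.
  - intros eps He; destruct (power_vanishes_at_0 s Hs eps He) as [d [Hd Hsmall]].
    exists (Rmin d 1); split; [apply Rmin_glb_lt; lra |]; intros u Hu Hud.
    pose proof (Rmin_l d 1); pose proof (Rmin_r d 1).
    specialize (Hsmall u Hu ltac:(lra)).
    rewrite Rabs_pos_eq by (left; apply Rmult_lt_0_compat; apply exp_pos).
    assert (exp (- u) <= 1) by (rewrite <- exp_0; apply exp_le_compat; lra).
    pose proof (exp_pos (s * ln u)); pose proof (exp_pos (- u)); nra.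
  - intros eps He; destruct (power_exp_vanishes_at_infinity s Hs eps He) as [M HM].
    exists M; intros v Hv.
    rewrite Rabs_pos_eq by (left; apply Rmult_lt_0_compat; apply exp_pos); auto.
Qed.

Lemma beta_integrand_pos p q t : 0 < beta_integrand p q t.
Proof. unfold beta_integrand, Rpower; apply Rmult_lt_0_compat; apply exp_pos. Qed.

Lemma beta_integrand_derivable p q t : 0 < t < 1 -> ex_derive (beta_integrand p q) t.
Proof. intros Ht; unfold beta_integrand, Rpower; auto_derive; lra. Qed.

Lemma beta_integrand_succ p q t : 0 < t -> beta_integrand (p + 1) q t = t * beta_integrand p q t.
Proof.
  intros Ht; unfold beta_integrand, Rpower; replace (p + 1 - 1) with p by ring.
  rewrite (exp_pred_ln p t) by lra; field; lra.
Qed.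

Definition beta_partial (p q y u : R) : R := RInt (beta_integrand p q) u y.

Lemma ex_RInt_beta p q u v : 0 < u < 1 -> 0 < v < 1 -> ex_RInt (beta_integrand p q) u v.
Proof.
  intros Hu Hv; apply ex_RInt_derivable; intros z Hz.
  apply beta_integrand_derivable, (segment_unit u v); auto.
Qed.

Lemma beta_partial_mono p q y u' u : 0 < u' <= u -> u <= y < 1 ->
  beta_partial p q y u <= beta_partial p q y u'.
Proof.
  intros Hu Hy; unfold beta_partial.
  assert (Hsplit : RInt (beta_integrand p q) u' u + RInt (beta_integrand p q) u y
                   = RInt (beta_integrand p q) u' y)
    by (apply (RInt_Chasles (beta_integrand p q)); apply ex_RInt_beta; lra).
  assert (0 <= RInt (beta_integrand p q) u' u); [| lra].
  apply RInt_ge_0; [lra | apply ex_RInt_beta; lra |].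
  intros; left; apply beta_integrand_pos.
Qed.

(* For p > 0: (1-t)^(q-1) is bounded on (0, y] and t^(p-1) is integrable at 0. *)
Lemma beta_partial_bounded p q y : 0 < p -> 0 < y < 1 ->
  exists B, forall u, 0 < u <= y -> beta_partial p q y u <= B.
Proof.
  intros Hp Hy; set (Mq := exp (Rabs (q - 1) * - ln (1 - y))).
  exists (Mq * (exp (p * ln y) / p)); intros u Hu; unfold beta_partial.
  assert (X : ex_RInt (fun t => exp ((p - 1) * ln t)) u y).
  { apply ex_RInt_derivable; intros z Hz.
    pose proof (segment_pos u y z ltac:(lra) ltac:(lra) Hz); auto_derive; lra. }
  apply (Rle_trans _ (RInt (fun t => Mq * exp ((p - 1) * ln t)) u y)).
  - apply RInt_le; [lra | apply ex_RInt_beta; lra |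
                    exact (ex_RInt_scal (V := R_NormedModule) _ _ _ Mq X) |].
    intros t Ht; unfold beta_integrand, Rpower; rewrite Rmult_comm.
    apply Rmult_le_compat_r; [left; apply exp_pos |]; apply exp_le_compat.
    assert (ln (1 - y) <= ln (1 - t)) by (apply Rlt_le, ln_increasing; lra).
    assert (ln (1 - t) <= 0) by (rewrite <- ln_1; apply Rlt_le, ln_increasing; lra).
    eapply Rle_trans; [apply Rle_abs |]; rewrite Rabs_mult, (Rabs_left1 (ln (1 - t))) by lra.
    apply Rmult_le_compat_l; [apply Rabs_pos | lra].
  - rewrite RInt_scal_R, RInt_power by (auto; lra).
    apply Rmult_le_compat_l; [left; apply exp_pos |].
    pose proof (exp_pos (p * ln u)).
    assert (0 < / p) by (apply Rinv_0_lt_compat; lra); unfold Rdiv; nra.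
Qed.

Definition converges_0 (h : R -> R) (y l : R) : Prop :=
  forall eps, 0 < eps -> exists delta, 0 < delta /\
    forall u, 0 < u -> u < delta -> u <= y -> Rabs (h u - l) < eps.

(* Any eps-neighbourhood of 0+ meets (0, y]; this makes limits unique and
   lets inequalities pass to the limit. *)
Lemma converges_0_le h1 h2 y l1 l2 : 0 < y ->
  converges_0 h1 y l1 -> converges_0 h2 y l2 ->
  (forall u, 0 < u -> u <= y -> h1 u <= h2 u) -> l1 <= l2.
Proof.
  intros Hy H1 H2 Hle; apply Rnot_lt_le; intros Hl; set (eps := (l1 - l2) / 2).
  destruct (H1 eps ltac:(unfold eps; lra)) as [d1 [Hd1 A1]].
  destruct (H2 eps ltac:(unfold eps; lra)) as [d2 [Hd2 A2]].
  set (u := Rmin (Rmin d1 d2) y / 2).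
  assert (0 < Rmin (Rmin d1 d2) y) by (repeat apply Rmin_glb_lt; lra).
  pose proof (Rmin_l (Rmin d1 d2) y); pose proof (Rmin_r (Rmin d1 d2) y).
  pose proof (Rmin_l d1 d2); pose proof (Rmin_r d1 d2).
  specialize (A1 u ltac:(unfold u; lra) ltac:(unfold u; lra) ltac:(unfold u; lra)).
  specialize (A2 u ltac:(unfold u; lra) ltac:(unfold u; lra) ltac:(unfold u; lra)).
  specialize (Hle u ltac:(unfold u; lra) ltac:(unfold u; lra)).
  apply Rabs_def2 in A1; apply Rabs_def2 in A2; unfold eps in *; lra.
Qed.

Lemma converges_0_unique h y l1 l2 : 0 < y ->
  converges_0 h y l1 -> converges_0 h y l2 -> l1 = l2.
Proof.
  intros Hy H1 H2; apply Rle_antisym; apply (converges_0_le h h y); auto; intros; lra.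
Qed.

Lemma converges_0_ext h1 h2 y l : converges_0 h1 y l ->
  (forall u, 0 < u -> u <= y -> h1 u = h2 u) -> converges_0 h2 y l.
Proof.
  intros H E eps He; destruct (H eps He) as [d [Hd A]]; exists d; split; auto.
  intros u Hu Hud Huy; rewrite <- E; auto.
Qed.

Lemma converges_0_lin h1 h2 y l1 l2 a b :
  converges_0 h1 y l1 -> converges_0 h2 y l2 ->
  converges_0 (fun u => a * h1 u + b * h2 u) y (a * l1 + b * l2).
Proof.
  intros H1 H2 eps He; set (e := eps / (Rabs a + Rabs b + 1)).
  pose proof (Rabs_pos a); pose proof (Rabs_pos b).
  assert (He' : 0 < e) by (unfold e; apply Rdiv_lt_0_compat; lra).
  destruct (H1 e He') as [d1 [Hd1 A1]]; destruct (H2 e He') as [d2 [Hd2 A2]].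
  exists (Rmin d1 d2); split; [apply Rmin_glb_lt; lra |]; intros u Hu Hd Huy.
  pose proof (Rmin_l d1 d2); pose proof (Rmin_r d1 d2).
  specialize (A1 u Hu ltac:(lra) Huy); specialize (A2 u Hu ltac:(lra) Huy).
  replace (a * h1 u + b * h2 u - (a * l1 + b * l2))
    with (a * (h1 u - l1) + b * (h2 u - l2)) by ring.
  eapply Rle_lt_trans; [apply Rabs_triang |]; rewrite !Rabs_mult.
  assert (Rabs a * Rabs (h1 u - l1) <= Rabs a * e) by (apply Rmult_le_compat_l; lra).
  assert (Rabs b * Rabs (h2 u - l2) <= Rabs b * e) by (apply Rmult_le_compat_l; lra).
  assert (eps = Rabs a * e + Rabs b * e + e) by (unfold e; field; lra); lra.
Qed.

Lemma converges_0_scal h y l a : converges_0 h y l ->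
  converges_0 (fun u => a * h u) y (a * l).
Proof.
  intros H; pose proof (converges_0_lin h h y l l a 0 H H) as L.
  rewrite Rmult_0_l, Rplus_0_r in L.
  apply (converges_0_ext _ _ _ _ L); intros; ring.
Qed.

Lemma is_inc_beta_integral_iff p q y l : 0 < y < 1 ->
  is_inc_beta_integral p q y l <-> converges_0 (beta_partial p q y) y l.
Proof.
  intros Hy; split.
  - intros [_ H] eps He; destruct (H eps He) as [d [Hd HM]].
    exists d; split; auto; intros u Hu Hud Huy.
    pose proof (ex_RInt_Reals_0 _ _ _ (ex_RInt_beta p q u y ltac:(lra) ltac:(lra))) as pr.
    unfold beta_partial; rewrite (RInt_Reals _ _ _ pr); now apply HM.
  - intros H; split.
    + intros u Hu Huy; constructor; apply ex_RInt_Reals_0, ex_RInt_beta; lra.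
    + intros eps He; destruct (H eps He) as [d [Hd HM]].
      exists d; split; auto; intros u pr Hu Hud Huy.
      rewrite <- RInt_Reals; now apply HM.
Qed.

(* For p > 0 the partial integrals increase (as u decreases) to their
   supremum, the value of the improper integral. *)
Lemma beta_partial_converges p q y : 0 < p -> 0 < y < 1 ->
  exists l, converges_0 (beta_partial p q y) y l /\
            forall u, 0 < u <= y -> beta_partial p q y u <= l.
Proof.
  intros Hp Hy; destruct (beta_partial_bounded p q y Hp Hy) as [B HB].
  set (E := fun z => exists u, 0 < u <= y /\ z = beta_partial p q y u).
  assert (Hb : bound E) by (exists B; intros z [u [Hu ->]]; now apply HB).
  assert (Hne : exists z, E z) by (exists (beta_partial p q y y); exists y; split; auto; lra).
  destruct (completeness E Hb Hne) as [g Hg].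
  assert (Hle : forall u, 0 < u <= y -> beta_partial p q y u <= g)
    by (intros u Hu; apply (proj1 Hg); exists u; auto).
  exists g; split; auto.
  intros eps He; destruct (lub_approx E g eps Hg He) as [z [[u0 [Hu0 ->]] Hgt]].
  exists u0; split; [lra |]; intros u Hu Hu0' Huy.
  pose proof (beta_partial_mono p q y u u0 ltac:(lra) ltac:(lra)).
  pose proof (Hle u ltac:(lra)); apply Rabs_def1; lra.
Qed.

Lemma inc_beta_spec p q y : 0 < p -> 0 < y < 1 ->
  converges_0 (beta_partial p q y) y (inc_beta_integral p q y) /\
  0 <= inc_beta_integral p q y.
Proof.
  intros Hp Hy; destruct (beta_partial_converges p q y Hp Hy) as [g [Hg Hle]].
  assert (HJ : is_inc_beta_integral p q y (inc_beta_integral p q y)).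
  { unfold inc_beta_integral; apply epsilon_spec; exists g.
    now apply is_inc_beta_integral_iff. }
  apply is_inc_beta_integral_iff in HJ; auto.
  rewrite (converges_0_unique _ y _ _ ltac:(lra) HJ Hg); split; auto.
  specialize (Hle y ltac:(lra)); unfold beta_partial in Hle.
  rewrite RInt_point in Hle; exact Hle.
Qed.

(* Integration by parts against d/dt [t^p (1-t)^q]:
   p int_u^y t^(p-1)(1-t)^(q-1) - (p+q) int_u^y t^p (1-t)^(q-1)
   = y^p (1-y)^q - u^p (1-u)^q. *)
Lemma beta_partial_succ p q y u : 0 < y < 1 -> 0 < u <= y ->
  p * beta_partial p q y u - (p + q) * beta_partial (p + 1) q y u =
  exp (p * ln y) * exp (q * ln (1 - y)) - exp (p * ln u) * exp (q * ln (1 - u)).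
Proof.
  intros Hy Hu.
  set (f := fun t => p * beta_integrand p q t - (p + q) * beta_integrand (p + 1) q t).
  assert (E : RInt f u y = exp (p * ln y) * exp (q * ln (1 - y))
                           - exp (p * ln u) * exp (q * ln (1 - u))).
  { as_real_eq; rewrite <- (RInt_antiderivative (fun t => exp (p * ln t) * exp (q * ln (1 - t))));
      [reflexivity | intros z Hz; pose proof (segment_unit u y z ltac:(lra) ltac:(lra) Hz);
                     unfold f ..].
    - auto_derive; [lra |]; rewrite beta_integrand_succ by lra; unfold beta_integrand, Rpower.
      rewrite (exp_pred_ln p z), (exp_pred_ln q (1 - z)) by lra.
      replace (1 + - z) with (1 - z) by ring; field; lra.
    - unfold beta_integrand, Rpower; auto_derive; lra. }
  pose proof (ex_RInt_beta p q u y ltac:(lra) ltac:(lra)) as X1.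
  pose proof (ex_RInt_beta (p + 1) q u y ltac:(lra) ltac:(lra)) as X2.
  unfold f in E; rewrite RInt_minus_R, !RInt_scal_R in E; auto.
  - exact (ex_RInt_scal (V := R_NormedModule) _ _ _ p X1).
  - exact (ex_RInt_scal (V := R_NormedModule) _ _ _ (p + q) X2).
Qed.

(* Passing to the limit u -> 0+ (where u^p (1-u)^q -> 0):
   p J(p) - (p+q) J(p+1) = y^p (1-y)^q, with J(p) = int_0^y t^(p-1)(1-t)^(q-1). *)
Lemma inc_beta_succ p q y : 0 < p -> 0 < q -> 0 < y < 1 ->
  p * inc_beta_integral p q y - (p + q) * inc_beta_integral (p + 1) q y =
  exp (p * ln y) * exp (q * ln (1 - y)).
Proof.
  intros Hp Hq Hy.
  destruct (inc_beta_spec p q y Hp Hy) as [H1 _].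
  destruct (inc_beta_spec (p + 1) q y ltac:(lra) Hy) as [H2 _].
  pose proof (converges_0_lin _ _ _ _ _ p (- (p + q)) H1 H2) as L.
  set (Y := exp (p * ln y) * exp (q * ln (1 - y))).
  assert (Lb : converges_0 (fun u => p * beta_partial p q y u
                                     + - (p + q) * beta_partial (p + 1) q y u) y Y).
  { intros eps He; destruct (power_vanishes_at_0 p Hp eps He) as [d [Hd Hsmall]].
    exists (Rmin d 1); split; [apply Rmin_glb_lt; lra |]; intros u Hu Hud Huy.
    pose proof (Rmin_l d 1); pose proof (Rmin_r d 1).
    specialize (Hsmall u Hu ltac:(lra)).
    replace (p * beta_partial p q y u + - (p + q) * beta_partial (p + 1) q y u - Y)
      with (- (exp (p * ln u) * exp (q * ln (1 - u))))
      by (pose proof (beta_partial_succ p q y u Hy ltac:(lra)); unfold Y; lra).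
    rewrite Rabs_Ropp, Rabs_pos_eq by (left; apply Rmult_lt_0_compat; apply exp_pos).
    assert (exp (q * ln (1 - u)) <= 1).
    { apply (Rle_trans _ (exp 0)); [apply exp_le_compat | rewrite exp_0; lra].
      assert (ln (1 - u) <= 0) by (rewrite <- ln_1; apply Rlt_le, ln_increasing; lra).
      nra. }
    pose proof (exp_pos (p * ln u)); nra. }
  pose proof (converges_0_unique _ y _ _ ltac:(lra) L Lb); lra.
Qed.

(* Since t <= y on [u, y]: J(p+1) <= y J(p). *)
Lemma inc_beta_succ_le p q y : 0 < p -> 0 < y < 1 ->
  inc_beta_integral (p + 1) q y <= y * inc_beta_integral p q y.
Proof.
  intros Hp Hy.
  destruct (inc_beta_spec p q y Hp Hy) as [H1 _].
  destruct (inc_beta_spec (p + 1) q y ltac:(lra) Hy) as [H2 _].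
  apply (converges_0_le _ _ y _ _ ltac:(lra) H2 (converges_0_scal _ _ _ y H1)).
  intros u Hu Huy; unfold beta_partial.
  pose proof (ex_RInt_beta p q u y ltac:(lra) ltac:(lra)) as X.
  rewrite <- RInt_scal_R by exact X.
  apply RInt_le; auto; [apply ex_RInt_beta; lra |
                        exact (ex_RInt_scal (V := R_NormedModule) _ _ _ y X) |].
  intros t Ht; rewrite beta_integrand_succ by lra.
  apply Rmult_le_compat_r; [left; apply beta_integrand_pos | lra].
Qed.

Definition inc_beta_coef (p q : R) : R := Gamma (p + q) / (Gamma q * Gamma (p + 1)).

(* Multiplying the recurrence by 1/B(p,q) and using Gamma(s+1) = s Gamma(s):
   I_y(p,q) - I_y(p+1,q) = coef(p,q) y^p (1-y)^q. *)
Lemma reg_inc_beta_step p q y : 0 < p -> 0 < q -> 0 < y < 1 ->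
  reg_inc_beta y p q - reg_inc_beta y (p + 1) q =
  inc_beta_coef p q * (exp (p * ln y) * exp (q * ln (1 - y))).
Proof.
  intros Hp Hq Hy; unfold reg_inc_beta, Beta, inc_beta_coef.
  replace (p + 1 + q) with (p + q + 1) by ring.
  rewrite (Gamma_succ p), (Gamma_succ (p + q)) by lra.
  pose proof (inc_beta_succ p q y Hp Hq Hy) as Hrec.
  pose proof (Gamma_pos p Hp); pose proof (Gamma_pos q Hq).
  pose proof (Gamma_pos (p + q) ltac:(lra)).
  set (Y := exp (p * ln y) * exp (q * ln (1 - y))) in *.
  replace (inc_beta_integral (p + 1) q y) with ((p * inc_beta_integral p q y - Y) / (p + q))
    by (field_simplify_eq; lra).
  field; repeat split; lra.
Qed.

Lemma reg_inc_beta_nonneg p q y : 0 < p -> 0 < q -> 0 < y < 1 -> 0 <= reg_inc_beta y p q.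
Proof.
  intros Hp Hq Hy; unfold reg_inc_beta, Beta.
  pose proof (Gamma_pos p Hp); pose proof (Gamma_pos q Hq).
  pose proof (Gamma_pos (p + q) ltac:(lra)).
  apply Rmult_le_pos; [apply (inc_beta_spec p q y); auto |].
  left; apply Rinv_0_lt_compat, Rdiv_lt_0_compat; [apply Rmult_lt_0_compat |]; lra.
Qed.

(* I_y(p+1, q) <= y (p+q)/p I_y(p, q): the ratio tends to y < 1 as p grows. *)
Lemma reg_inc_beta_succ_le p q y : 0 < p -> 0 < q -> 0 < y < 1 ->
  reg_inc_beta y (p + 1) q <= y * (p + q) / p * reg_inc_beta y p q.
Proof.
  intros Hp Hq Hy; unfold reg_inc_beta, Beta.
  replace (p + 1 + q) with (p + q + 1) by ring.
  rewrite (Gamma_succ p), (Gamma_succ (p + q)) by lra.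
  pose proof (inc_beta_succ_le p q y Hp Hy).
  pose proof (Gamma_pos p Hp); pose proof (Gamma_pos q Hq).
  pose proof (Gamma_pos (p + q) ltac:(lra)).
  set (k := (p + q) * Gamma (p + q) / (p * Gamma p * Gamma q)).
  assert (0 < k) by (unfold k; apply Rdiv_lt_0_compat; repeat apply Rmult_lt_0_compat; lra).
  replace (inc_beta_integral (p + 1) q y / (p * Gamma p * Gamma q / ((p + q) * Gamma (p + q))))
    with (k * inc_beta_integral (p + 1) q y) by (unfold k; field; repeat split; lra).
  replace (y * (p + q) / p * (inc_beta_integral p q y / (Gamma p * Gamma q / Gamma (p + q))))
    with (k * (y * inc_beta_integral p q y)) by (unfold k; field; repeat split; lra).
  apply Rmult_le_compat_l; lra.
Qed.

Lemma infinite_sum_ext (u v : nat -> R) l :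
  (forall n, u n = v n) -> infinite_sum u l -> infinite_sum v l.
Proof.
  intros E H; apply is_series_Reals; apply is_series_Reals in H.
  exact (is_series_ext (V := R_NormedModule) u v l E H).
Qed.

Lemma infinite_sum_scal (u : nat -> R) l c :
  infinite_sum u l -> infinite_sum (fun n => c * u n) (c * l).
Proof.
  intros H; apply is_series_Reals; apply is_series_Reals in H.
  exact (is_series_scal_l (V := R_NormedModule) c u l H).
Qed.

Lemma infinite_sum_tail (u : nat -> R) l N : infinite_sum u l ->
  infinite_sum (fun k => u (S N + k)%nat) (l - sum_f_R0 u N).
Proof.
  intros H; apply is_series_Reals; apply is_series_Reals in H.
  apply (is_series_incr_n (V := R_NormedModule)); [lia |].
  simpl Nat.pred; rewrite sum_n_Reals; unfold plus; simpl.
  replace (l - sum_f_R0 u N + sum_f_R0 u N) with l by ring; exact H.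
Qed.

Lemma infinite_sum_le (u v : nat -> R) lu lv : (forall n, u n <= v n) ->
  infinite_sum u lu -> infinite_sum v lv -> lu <= lv.
Proof. intros H Hu Hv; eapply Rle_cv_lim; [| exact Hu | exact Hv]; intros n; now apply sum_Rle. Qed.

Lemma sum_f_R0_mono (w : nat -> R) N M : (forall n, 0 <= w n) -> (N <= M)%nat ->
  sum_f_R0 w N <= sum_f_R0 w M.
Proof. intros Hw H; induction H; [lra |]; rewrite tech5; specialize (Hw (S m)); lra. Qed.

Lemma sum_f_R0_le_sum (u : nat -> R) l N : (forall n, 0 <= u n) -> infinite_sum u l ->
  sum_f_R0 u N <= l.
Proof.
  intros Hu H; apply (growing_ineq (sum_f_R0 u)); auto.
  intros n; rewrite tech5; specialize (Hu (S n)); lra.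
Qed.

Lemma eventually_contracting_cv0 (c : nat -> R) N rho :
  (forall n, 0 <= c n) -> 0 <= rho < 1 ->
  (forall n, (N <= n)%nat -> c (S n) <= rho * c n) -> Un_cv c 0.
Proof.
  intros Hc Hr Hs.
  assert (G : forall m, c (N + m)%nat <= rho ^ m * c N).
  { induction m as [| m IH]; [rewrite Nat.add_0_r; simpl; lra |].
    replace (N + S m)%nat with (S (N + m)) by lia.
    eapply Rle_trans; [apply Hs; lia |]; simpl; rewrite Rmult_assoc.
    apply Rmult_le_compat_l; lra. }
  pose proof (Hc N) as HcN.
  intros eps He.
  destruct (pow_lt_1_zero rho ltac:(rewrite Rabs_pos_eq; lra) (eps / (c N + 1)))
    as [M HM]; [apply Rdiv_lt_0_compat; lra |].
  exists (N + M)%nat; intros n Hn; unfold Rdist; rewrite Rminus_0_r.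
  replace n with (N + (n - N))%nat by lia; rewrite Rabs_pos_eq by apply Hc.
  specialize (HM (n - N)%nat ltac:(lia)); rewrite Rabs_pos_eq in HM by (apply pow_le; lra).
  apply (Rmult_lt_compat_r (c N + 1)) in HM; [| lra].
  unfold Rdiv in HM; rewrite Rmult_assoc, Rinv_l in HM by lra.
  pose proof (G (n - N)%nat); pose proof (pow_le rho (n - N) ltac:(lra)); nra.
Qed.

Lemma telescoping_sum (a t : nat -> R) :
  (forall n, a n - a (S n) = t n) -> Un_cv a 0 -> infinite_sum t (a O).
Proof.
  intros Ht Ha.
  assert (P : forall n, sum_f_R0 t n = a O - a (S n)).
  { induction n as [| n IH]; simpl; rewrite <- ?Ht; [ring |].
    rewrite IH; ring. }
  intros eps He; destruct (Ha eps He) as [M HM]; exists M; intros n Hn.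
  specialize (HM (S n) ltac:(lia)); unfold Rdist in *; rewrite P.
  replace (a O - a (S n) - a O) with (- (a (S n) - 0)) by ring; now rewrite Rabs_Ropp.
Qed.

(* The partial sums differ by sum_{j<=N} w_j T_(N+1), which is squeezed
   between 0 and the tail of the left series. *)
Lemma sum_partial_sums_interchange (e w T : nat -> R) L :
  (forall n, 0 <= e n) -> (forall n, 0 <= w n) ->
  (forall j, infinite_sum (fun k => e (j + k)%nat) (T j)) ->
  infinite_sum (fun n => e n * sum_f_R0 w n) L ->
  infinite_sum (fun j => w j * T j) L.
Proof.
  intros He Hw HT HS.
  set (u := fun n => e n * sum_f_R0 w n).
  assert (Hu : forall n, 0 <= u n)
    by (intros n; apply Rmult_le_pos; [| apply cond_pos_sum]; auto).
  assert (Tstep : forall j, T j = e j + T (S j)).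
  { intros j; pose proof (infinite_sum_tail _ _ O (HT j)) as A; simpl in A.
    rewrite Nat.add_0_r in A.
    assert (B : infinite_sum (fun k => e (j + S k)%nat) (T (S j))).
    { apply (infinite_sum_ext (fun k => e (S j + k)%nat)); [intros k; f_equal; lia | apply HT]. }
    pose proof (uniqueness_sum _ _ _ A B); lra. }
  assert (Tnn : forall j, 0 <= T j).
  { intros j; pose proof (sum_f_R0_le_sum _ _ O (fun k => He (j + k)%nat) (HT j)) as Hhead.
    simpl in Hhead; rewrite Nat.add_0_r in Hhead; specialize (He j); lra. }
  assert (P : forall N, sum_f_R0 (fun j => w j * T j) N
                        = sum_f_R0 u N + sum_f_R0 w N * T (S N)).
  { induction N as [| N IH]; unfold u.
    - simpl; rewrite (Tstep O); ring.
    - rewrite !tech5, IH; unfold u; rewrite (Tstep (S N)); ring. }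
  assert (Bd : forall N, sum_f_R0 w N * T (S N) <= L - sum_f_R0 u N).
  { intros N.
    apply (infinite_sum_le (fun k => sum_f_R0 w N * e (S N + k)%nat) (fun k => u (S N + k)%nat)).
    - intros k; unfold u; rewrite Rmult_comm; apply Rmult_le_compat_l; [apply He |].
      apply sum_f_R0_mono; auto; lia.
    - apply infinite_sum_scal, HT.
    - apply infinite_sum_tail; auto. }
  intros eps Heps; destruct (HS eps Heps) as [M HM]; exists M; intros n Hn.
  specialize (HM n Hn); fold u in HM; unfold Rdist in *; rewrite P.
  pose proof (Rmult_le_pos _ _ (cond_pos_sum w n Hw) (Tnn (S n))).
  pose proof (Bd n); pose proof (sum_f_R0_le_sum u L n Hu HS).
  rewrite Rabs_left1 in HM by lra; apply Rabs_def1; lra.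
Qed.

(* I_y(p + n, q) -> 0 as n -> oo: from n >= 2yq/(1-y) on, the ratio bound
   y (p+n+q)/(p+n) is at most (1+y)/2 < 1. *)
Lemma reg_inc_beta_vanishes p q y : 0 < p -> 0 < q -> 0 < y < 1 ->
  Un_cv (fun n => reg_inc_beta y (p + INR n) q) 0.
Proof.
  intros Hp Hq Hy.
  destruct (INR_unbounded (2 * y * q / (1 - y))) as [N HN].
  apply (eventually_contracting_cv0 _ N ((1 + y) / 2)); [| lra |].
  - intros n; apply reg_inc_beta_nonneg; auto; pose proof (pos_INR n); lra.
  - intros n Hn; rewrite S_INR, <- Rplus_assoc.
    pose proof (pos_INR n); pose proof (le_INR _ _ Hn).
    eapply Rle_trans; [apply reg_inc_beta_succ_le; auto; lra |].
    apply Rmult_le_compat_r; [apply reg_inc_beta_nonneg; auto; lra |].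
    apply (Rmult_le_reg_r (p + INR n)); [lra |].
    unfold Rdiv; rewrite Rmult_assoc, Rinv_l by lra.
    assert (2 * y * q <= INR n * (1 - y)).
    { replace (2 * y * q) with (2 * y * q / (1 - y) * (1 - y)) by (field; lra).
      apply Rmult_le_compat_r; lra. }
    nra.
Qed.

(* Telescoping the recurrence step gives the series expansion
   I_y(p,q) = sum_k coef(p+k,q) y^(p+k) (1-y)^q. *)
Lemma reg_inc_beta_series p q y : 0 < p -> 0 < q -> 0 < y < 1 ->
  infinite_sum
    (fun k => inc_beta_coef (p + INR k) q * (exp ((p + INR k) * ln y) * exp (q * ln (1 - y))))
    (reg_inc_beta y p q).
Proof.
  intros Hp Hq Hy.
  replace (reg_inc_beta y p q) with (reg_inc_beta y (p + INR 0) q) by (f_equal; simpl; ring).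
  apply (telescoping_sum (fun n => reg_inc_beta y (p + INR n) q));
    [| now apply reg_inc_beta_vanishes].
  intros n; rewrite S_INR, <- Rplus_assoc; pose proof (pos_INR n).
  apply reg_inc_beta_step; auto; lra.
Qed.

Definition noncentral_coef (a b x : R) (n : nat) : R :=
  Gamma (a + b + INR n) / (Gamma b * Gamma (a + 1 + INR n)) * x ^ n.

Definition poisson_weight (lam : R) (j : nat) : R := lam ^ j / INR (fact j).

Lemma noncentral_coef_nonneg a b x n : 0 < a -> 0 < b -> 0 < x ->
  0 <= noncentral_coef a b x n.
Proof.
  intros Ha Hb Hx; unfold noncentral_coef; pose proof (pos_INR n).
  pose proof (Gamma_pos (a + b + INR n) ltac:(lra)); pose proof (Gamma_pos b Hb).
  pose proof (Gamma_pos (a + 1 + INR n) ltac:(lra)).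
  apply Rmult_le_pos; [| apply pow_le; lra].
  left; apply Rdiv_lt_0_compat; [| apply Rmult_lt_0_compat]; lra.
Qed.

Lemma poisson_weight_nonneg lam j : 0 <= lam -> 0 <= poisson_weight lam j.
Proof.
  intros Hl; unfold poisson_weight; apply Rmult_le_pos; [now apply pow_le |].
  left; apply Rinv_0_lt_compat, lt_0_INR, lt_O_fact.
Qed.

Lemma poisson_partial_le_exp lam n : 0 <= lam ->
  sum_f_R0 (poisson_weight lam) n <= exp lam.
Proof.
  intros Hl; apply sum_f_R0_le_sum; [intros; now apply poisson_weight_nonneg |].
  unfold exp; destruct (exist_exp lam) as [l Hel]; simpl; unfold exp_in in Hel.
  revert Hel; apply infinite_sum_ext; intros i; unfold poisson_weight, Rdiv; ring.
Qed.

Lemma noncentral_coef_tail a b x j : 0 < a -> 0 < b -> 0 < x < 1 ->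
  infinite_sum (fun k => noncentral_coef a b x (j + k))
    (reg_inc_beta x (a + INR j) b / (Rpower x a * Rpower (1 - x) b)).
Proof.
  intros Ha Hb Hx; pose proof (pos_INR j).
  pose proof (infinite_sum_scal _ _ (/ (Rpower x a * Rpower (1 - x) b))
                (reg_inc_beta_series (a + INR j) b x ltac:(lra) Hb Hx)) as Hseries.
  unfold Rdiv; rewrite Rmult_comm; revert Hseries; apply infinite_sum_ext; intros k.
  pose proof (pos_INR k); pose proof (Gamma_pos b Hb).
  pose proof (Gamma_pos (a + INR j + INR k + 1) ltac:(lra)).
  unfold noncentral_coef, inc_beta_coef, Rpower.
  rewrite <- (Rpower_pow (j + k) x), plus_INR by lra; unfold Rpower.
  replace (a + b + (INR j + INR k)) with (a + INR j + INR k + b) by ring.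
  replace (a + 1 + (INR j + INR k)) with (a + INR j + INR k + 1) by ring.
  replace ((a + INR j + INR k) * ln x) with (a * ln x + (INR j + INR k) * ln x) by ring.
  rewrite exp_plus; field.
  repeat split; apply Rgt_not_eq; try apply exp_pos; lra.
Qed.

(* The series of the theorem converges: it is dominated by exp lam times the
   coefficient series, whose sum is I_x(a, b) / (x^a (1-x)^b). *)
Lemma noncentral_series_converges a b lam x : 0 < a -> 0 < b -> 0 <= lam -> 0 < x < 1 ->
  exists S, infinite_sum
              (fun n => noncentral_coef a b x n * sum_f_R0 (poisson_weight lam) n) S.
Proof.
  intros Ha Hb Hl Hx.
  assert (Hdom : ex_series (fun n => noncentral_coef a b x n * exp lam)).
  { eexists; apply is_series_Reals.
    apply (infinite_sum_ext (fun n => exp lam * noncentral_coef a b x (0 + n))).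
    - intros n; simpl; ring.
    - apply infinite_sum_scal, noncentral_coef_tail; auto. }
  destruct (ex_series_le (V := R_CompleteNormedModule)
              (fun n => noncentral_coef a b x n * sum_f_R0 (poisson_weight lam) n)
              (fun n => noncentral_coef a b x n * exp lam))
    as [S HS]; [| exact Hdom | exists S; now apply is_series_Reals].
  intros n; unfold norm; simpl; unfold abs; simpl.
  pose proof (noncentral_coef_nonneg a b x n Ha Hb ltac:(lra)).
  pose proof (cond_pos_sum _ n (fun j => poisson_weight_nonneg lam j Hl)).
  rewrite Rabs_pos_eq by (apply Rmult_le_pos; auto).
  apply Rmult_le_compat_l; auto; now apply poisson_partial_le_exp.
Qed.

(* ncbeta is defined through a choice of the sum of its series; any actual
   sum L of that series gives its value. *)
Lemma ncbeta_of_sum p q x y L : infinite_sum (ncbeta_term p q x y) L ->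
  ncbeta p q x y = exp (- (x / 2)) * L.
Proof.
  intros HL; unfold ncbeta; f_equal.
  exact (uniqueness_sum _ _ _ (epsilon_spec _ _ (ex_intro _ _ HL)) HL).
Qed.

Theorem mainTheorem16 (a b lam x : R) :
  0 < a -> 0 < b -> 0 <= lam -> 0 < x < 1 ->
  exists S : R,
    infinite_sum
      (fun n : nat =>
         Gamma (a + b + INR n) / (Gamma b * Gamma (a + 1 + INR n)) * x ^ n *
         sum_f_R0 (fun j : nat => lam ^ j / INR (fact j)) n) S /\
    exp (- lam) * Rpower x a * Rpower (1 - x) b * S = ncbeta a b (2 * lam) x.
Proof.
  intros Ha Hb Hl Hx.
  set (C := Rpower x a * Rpower (1 - x) b).
  destruct (noncentral_series_converges a b lam x Ha Hb Hl Hx) as [S HS].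
  exists S; split; [exact HS |].
  (* Summing over j first: S = sum_j lam^j/j! I_x(a+j, b) / C. *)
  assert (Hswap := sum_partial_sums_interchange (noncentral_coef a b x) (poisson_weight lam)
                     (fun j => reg_inc_beta x (a + INR j) b / C) S
                     (fun n => noncentral_coef_nonneg a b x n Ha Hb ltac:(lra))
                     (fun j => poisson_weight_nonneg lam j Hl)
                     (fun j => noncentral_coef_tail a b x j Ha Hb Hx) HS).
  assert (HC : 0 < C) by (unfold C, Rpower; apply Rmult_lt_0_compat; apply exp_pos).
  rewrite (ncbeta_of_sum a b (2 * lam) x (C * S)).
  - replace (2 * lam / 2) with lam by field; unfold C; ring.
  - apply (infinite_sum_ext (fun j => C * (poisson_weight lam j *
                                            (reg_inc_beta x (a + INR j) b / C)))).
    + intros j; unfold ncbeta_term, poisson_weight.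
      replace (2 * lam / 2) with lam by field; field; split; [apply INR_fact_neq_0 | lra].
    + now apply infinite_sum_scal.
Qed.
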